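(* Let $n\ge 2$. The function $\mathbf{H}$ is shift-invariant and homogeneous (of order 1): $\mathbf{H}(x_1+r,\dots,x_n+r)=\mathbf{H}(\mathbf{x})+r$ whenever $r\in[-1,1]$, $(x_1+r,\dots,x_n+r)\in[0,1]^n$ and $\mathbf{H}(\mathbf{x})+r\in[0,1]$; and $\mathbf{H}(\lambda x_1,\dots,\lambda x_n)=\lambda\mathbf{H}(\mathbf{x})$ for all $\lambda\in[0,1]$ and $\mathbf{x}\in[0,1]^n$.
   Context: For $\mathbf{x}\in[0,1]^n$ let $x_{(1)}\ge\dots\ge x_{(n)}$ be its entries in decreasing order, and define the median $Med(\mathbf{x})=\frac12(x_{(k)}+x_{(k+1)})$ if $n=2k$ and $Med(\mathbf{x})=x_{(k+1)}$ if $n=2k+1$. Define $f_i(\mathbf{x})=\frac1n$ if $x_1=\dots=x_n$, and otherwise $f_i(\mathbf{x})=\frac{1}{n-1}\Big(1-\frac{|x_i-Med(\mathbf{x})|}{\sum_{j=1}^n|x_j-Med(\mathbf{x})|}\Big)$. Then $\mathbf{H}(\mathbf{x})=\sum_{i=1}^n f_i(\mathbf{x})\,x_i$. *)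

From HB Require Import structures.
From mathcomp Require Import all_boot all_order all_algebra.
Set Implicit Arguments. Unset Strict Implicit. Unset Printing Implicit Defensive.
Import Order.TTheory GRing.Theory Num.Theory.
Local Open Scope ring_scope.

Section Median.
Variable R : realFieldType.
Variable n : nat.

(* entries of x sorted in decreasing order: x_(1) >= ... >= x_(n);
   x_(j) is nth 0 (sorted_dec x) (j-1) *)
Definition sorted_dec (x : 'I_n -> R) : seq R :=
  sort (fun a b : R => b <= a) [seq x i | i <- enum 'I_n].

(* Med x = (x_(k) + x_(k+1))/2 if n = 2k, x_(k+1) if n = 2k+1 *)
Definition Med (x : 'I_n -> R) : R :=
  let s := sorted_dec x in
  let k := n./2 in
  if odd n then nth 0 s k
  else (nth 0 s k.-1 + nth 0 s k) / 2%:R.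

Definition all_equal (x : 'I_n -> R) : bool :=
  [forall i, forall j, x i == x j].

Definition fw (x : 'I_n -> R) (i : 'I_n) : R :=
  if all_equal x then 1 / n%:R
  else 1 / (n.-1)%:R *
       (1 - `|x i - Med x| / \sum_(j < n) `|x j - Med x|).

Definition Hagg (x : 'I_n -> R) : R := \sum_(i < n) fw x i * x i.

End Median.

Definition in01 {R : realFieldType} (t : R) : bool := (0 <= t) && (t <= 1).

(* The median is equivariant under every increasing affine map t |-> a t + b,
   so the deviations |x_i - Med x| are all scaled by a and the weights f_i,
   being ratios of such deviations, are unchanged.  Since the weights sum to
   1, H commutes with the map.  The degenerate map a = 0 sends every vector to
   a constant one, on which H is that constant. *)

From HB Require Import structures.
From mathcomp Require Import all_boot all_order all_algebra.
From mathcomp Require Import zify ring.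
Import Order.TTheory GRing.Theory Num.Theory.
Set Implicit Arguments. Unset Strict Implicit.
Local Open Scope ring_scope.

Section AffineEquivariance.
Variables (R : realFieldType) (n : nat).
Hypothesis n_gt0 : (0 < n)%N.
Implicit Types (x y : 'I_n -> R) (a b c : R).

Lemma sorted_dec_affine x y a b : 0 < a -> (forall i, y i = a * x i + b) ->
  sorted_dec y = [seq a * t + b | t <- sorted_dec x].
Proof.
move=> a_gt0 yE; rewrite /sorted_dec (eq_map yE) (map_comp (fun t => a * t + b)).
rewrite (map_sort (leT := fun s t : R => t <= s)) // => s t /=.
by rewrite lerD2r ler_pM2l.
Qed.

Lemma Med_affine x y a b : 0 < a -> (forall i, y i = a * x i + b) ->
  Med y = a * Med x + b.
Proof.
move=> a_gt0 yE.
have size_sorted : size (sorted_dec x) = n.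
  by rewrite size_sort size_map size_enum_ord.
have nthE k : (k < n)%N ->
    nth 0 (sorted_dec y) k = a * nth 0 (sorted_dec x) k + b.
  by move=> lt_kn; rewrite (sorted_dec_affine a_gt0 yE) (nth_map 0) ?size_sorted.
rewrite /Med !nthE; [|lia..].
by case: ifP => // _; field.
Qed.

Lemma all_equal_affine x y a b : a != 0 -> (forall i, y i = a * x i + b) ->
  all_equal y = all_equal x.
Proof.
move=> a_neq0 yE; apply: eq_forallb => i; apply: eq_forallb => j.
by rewrite !yE (inj_eq (addIr b)) (inj_eq (mulfI a_neq0)).
Qed.

Lemma fw_affine x y a b : 0 < a -> (forall i, y i = a * x i + b) ->
  fw y =1 fw x.
Proof.
move=> a_gt0 yE i.
rewrite /fw (all_equal_affine (lt0r_neq0 a_gt0) yE) (Med_affine a_gt0 yE).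
case: ifP => // _.
have devE j : `|y j - (a * Med x + b)| = a * `|x j - Med x|.
  by rewrite yE [a * Med x + b]addrC addrKA -mulrBr normrM gtr0_norm.
rewrite devE (eq_bigr _ (fun j _ => devE j)) -mulr_sumr.
by rewrite invfM mulrACA divff ?mul1r // lt0r_neq0.
Qed.

Lemma not_all_equal_gt1 x : ~~ all_equal x -> (1 < n)%N.
Proof.
apply: contraR; rewrite -leqNgt => le_n1.
apply/forallP => i; apply/forallP => j; apply/eqP; congr x; apply: ord_inj.
by have := ltn_ord i; have := ltn_ord j; lia.
Qed.

Lemma sum_fw x : \sum_(i < n) fw x i = 1.
Proof.
rewrite /fw; have [_|not_eq] := boolP (all_equal x).
  by rewrite sumr_const card_ord div1r -[_ *+ n]mulr_natr mulVf // pnatr_eq0 -lt0n.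
have n_gt1 := not_all_equal_gt1 not_eq.
set S := \sum_(j < n) `|x j - Med x|.
have S_neq0 : S != 0.
  apply: contra not_eq; rewrite psumr_eq0 // => /allP devs0.
  have xE j : x j = Med x.
    by apply/eqP; rewrite -subr_eq0 -normr_eq0 -[_ == 0]implyTb devs0 ?mem_index_enum.
  by apply/forallP => i; apply/forallP => j; rewrite !xE.
rewrite -mulr_sumr sumrB sumr_const card_ord -mulr_suml mulfV //.
rewrite -(prednK n_gt0) mulrSr addrK mul1r mulVf // pnatr_eq0; lia.
Qed.

Lemma Hagg_const x c : (forall i, x i = c) -> Hagg x = c.
Proof.
move=> xE; rewrite /Hagg (eq_bigr (fun i => fw x i * c)) => [|i _].
  by rewrite -mulr_suml sum_fw mul1r.
by rewrite xE.
Qed.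

Lemma Hagg_affine x y a b : 0 <= a -> (forall i, y i = a * x i + b) ->
  Hagg y = a * Hagg x + b.
Proof.
rewrite le_eqVlt => /predU1P[<- | a_gt0] yE.
  by rewrite mul0r add0r; apply: Hagg_const => i; rewrite yE mul0r add0r.
rewrite /Hagg (eq_bigr (fun i => a * (fw x i * x i) + b * fw x i)) => [|i _].
  by rewrite big_split -mulr_sumr -mulr_sumr sum_fw mulr1.
by rewrite (fw_affine a_gt0 yE) yE; ring.
Qed.

End AffineEquivariance.

Theorem corollary4 (R : realFieldType) (n : nat) (hn : (2 <= n)%N) :
  (forall (x : 'I_n -> R) (r : R),
      (forall i, in01 (x i)) ->
      -1 <= r <= 1 ->
      (forall i, in01 (x i + r)) ->
      in01 (Hagg x + r) ->
      Hagg (fun i => x i + r) = Hagg x + r)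
  /\
  (forall (x : 'I_n -> R) (lam : R),
      (forall i, in01 (x i)) ->
      in01 lam ->
      Hagg (fun i => lam * x i) = lam * Hagg x).
Proof.
(* The range hypotheses only keep the vectors inside [0,1]^n; both identities
   hold on all of R^n. *)
have n_gt0 : (0 < n)%N by lia.
split.
- move=> x r _ _ _ _.
  by rewrite (Hagg_affine n_gt0 (a := 1) (x := x) (b := r)) ?mul1r // => i; rewrite mul1r.
- move=> x lam _ /andP[lam_ge0 _].
  by rewrite (Hagg_affine n_gt0 (x := x) (b := 0) lam_ge0) ?addr0 // => i; rewrite addr0.
Qed.
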